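(* Let $\mathcal{A}$ be a deterministic generalised Büchi automaton with $n$ states and $k$ output colours. Then there is a deterministic generalised Büchi automaton recognising $\mathcal{L}(\mathcal{A})$ which has the minimal number of states among all deterministic generalised Büchi automata recognising $\mathcal{L}(\mathcal{A})$ and which uses $O(n^2k)$ output colours.
   Context: An automaton is a tuple $(Q,\Sigma,q_{\mathrm{init}},\Delta,\Gamma,\mathrm{col},W)$ with finite state set, finite input alphabet, initial state, transitions $\Delta\subseteq Q\times\Sigma\times Q$, output alphabet $\Gamma$, labelling $\mathrm{col}:\Delta\to\Gamma$, acceptance condition $W\subseteq\Gamma^\omega$. A run on $w=a_1a_2\cdots$ is a sequence $(q_0,a_1,q_1)(q_1,a_2,q_2)\cdots$ of transitions with $q_0=q_{\mathrm{init}}$, accepting if its label sequence is in $W$; $\mathcal{L}(\mathcal{A})$ is the set of words with an accepting run. A generalised Büchi automaton with finite output colour set $C$ has $\Gamma=2^C$ and $W=\{x : \text{every } c\in C \text{ occurs in infinitely many letters of } x\}$; its number of output colours is $|C|$. Deterministic: for each $(p,a)$ at most one $q$ with $(p,a,q)\in\Delta$. *)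

From mathcomp Require Import all_boot.
Unset Printing Implicit Defensive.

(* Generalised Büchi automata over a finite input alphabet [Sigma].
   [gba_col] is the finite set C of output colours; the output alphabet is
   2^C, and [gba_lab] labels each transition with a subset of C. *)
Record gba (Sigma : finType) := Gba {
  gba_state : finType;
  gba_col : finType;
  gba_init : gba_state;
  gba_delta : gba_state -> Sigma -> gba_state -> bool;
  gba_lab : gba_state -> Sigma -> gba_state -> {set gba_col}
}.

Definition word (Sigma : finType) := nat -> Sigma.

Definition is_run {Sigma : finType} (A : gba Sigma) (w : word Sigma)
  (r : nat -> @gba_state _ A) : Prop :=
  r 0 = @gba_init _ A /\ forall i, @gba_delta _ A (r i) (w i) (r i.+1).

Definition gb_accepting {Sigma : finType} (A : gba Sigma) (w : word Sigma)
  (r : nat -> @gba_state _ A) : Prop :=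
  forall c : @gba_col _ A, forall N, exists i, N <= i /\ c \in @gba_lab _ A (r i) (w i) (r i.+1).

Definition accepts {Sigma : finType} (A : gba Sigma) (w : word Sigma) : Prop :=
  exists r, is_run A w r /\ gb_accepting A w r.

Definition same_lang {Sigma : finType} (A B : gba Sigma) : Prop :=
  forall w, accepts A w <-> accepts B w.

Definition deterministic {Sigma : finType} (A : gba Sigma) : Prop :=
  forall p a q q', @gba_delta _ A p a q -> @gba_delta _ A p a q' -> q = q'.

Definition nstates {Sigma : finType} (A : gba Sigma) : nat := #|@gba_state _ A|.
Definition ncolours {Sigma : finType} (A : gba Sigma) : nat := #|@gba_col _ A|.

From mathcomp Require Import all_boot zify boolp.

Set Implicit Arguments.
Unset Strict Implicit.

(* Take a state-minimal deterministic automaton B equivalent to A, restrict it to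
   transitions into live states, and recolour it with triples (c, p, x) of a colour
   c of A, a state p of B and a state x of A: a transition emits (c, p, x) unless it
   lies on a cycle through a jointly reachable pair (p, x) of the product B x A
   along which A avoids c. As B has at most n states, there are at most k n^2 of them.
   If A eventually avoids c on a word, some pair (p, x) recurs on the two runs, so
   every later transition lies on such a cycle and (c, p, x) falls silent.
   Conversely, if (c, p, x) falls silent on an accepting run of B, the cycles
   through the later transitions concatenate to a c-avoiding cycle seeing every
   colour of B; the lasso through it is accepted by B but not by A. Liveness
   makes every run of the new automaton extendable to an accepting one, so A
   never blocks on it. *)

Section Words.
Variable S : finType.

Definition wcat (u : seq S) (w : word S) : word S :=
  fun i => if i < size u then nth (w 0) u i else w (i - size u).

(* The default letter [a0] only matters for the empty cycle. *)
Definition omega_word (a0 : S) (v : seq S) : word S :=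
  fun i => nth a0 v (i %% size v).

Lemma wcat_shift u w i : wcat u w (size u + i) = w i.
Proof. by rewrite /wcat ltnNge leq_addr /= addKn. Qed.

Lemma map_wcat_iota u w k :
  map (wcat u w) (iota 0 (size u + k)) = u ++ map w (iota 0 k).
Proof.
rewrite iotaD map_cat add0n; congr (_ ++ _).
  apply: (@eq_from_nth _ (w 0)) => [|i]; rewrite size_map size_iota // => lt_iu.
  by rewrite (nth_map 0) ?size_iota // nth_iota // /wcat lt_iu.
by rewrite -[size u]addn0 iotaDl -map_comp; apply: eq_map => i /=; rewrite wcat_shift.
Qed.

Lemma map_omega_word_period a0 v m :
  map (omega_word a0 v) (iota (m * size v) (size v)) = v.
Proof.
apply: (@eq_from_nth _ a0) => [|i]; rewrite size_map size_iota // => lt_iv.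
by rewrite (nth_map 0) ?size_iota // nth_iota // /omega_word modnMDl modn_small.
Qed.

End Words.

Section DeterministicRuns.
Variables (S : finType) (X : gba S).
Notation Q := (gba_state S X).
Notation C := (gba_col S X).
Notation delta := (gba_delta S X).
Notation lab := (gba_lab S X).

Definition step (q : Q) (a : S) : option Q := [pick q' | delta q a q'].

Fixpoint steps (q : Q) (s : seq S) : option Q :=
  if s is a :: s' then obind (steps^~ s') (step q a) else Some q.

Fixpoint labels (q : Q) (s : seq S) : seq {set C} :=
  if s is a :: s' then
    if step q a is Some q' then lab q a q' :: labels q' s' else [::]
  else [::].

Definition run_from (q : Q) (w : word S) (r : nat -> Q) :=
  r 0 = q /\ forall i, delta (r i) (w i) (r i.+1).

Definition accepts_from (q : Q) (w : word S) :=
  exists r, run_from q w r /\ gb_accepting X w r.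

Lemma step_delta q a q' : step q a = Some q' -> delta q a q'.
Proof. by rewrite /step; case: pickP => // q'' delta_q'' [<-]. Qed.

Lemma steps_cat q s t : steps q (s ++ t) = obind (steps^~ t) (steps q s).
Proof. by elim: s q => //= a s IHs q; case: (step q a). Qed.

Lemma labels_cat q s t :
  labels q (s ++ t) = labels q s ++ (if steps q s is Some q' then labels q' t else [::]).
Proof. by elim: s q => //= a s IHs q; case: (step q a) => //= q'; rewrite IHs. Qed.

Lemma steps_iota_le q w k K :
  k <= K -> steps q (map w (iota 0 K)) != None -> steps q (map w (iota 0 k)) != None.
Proof. by move=> /subnKC <-; rewrite iotaD map_cat steps_cat; case: steps. Qed.

Lemma run_of_steps q w :
  (forall k, steps q (map w (iota 0 k)) != None) -> exists r, run_from q w r.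
Proof.
move=> defined; exists (fun k => odflt q (steps q (map w (iota 0 k)))); split=> // i.
have := defined i.+1; rewrite -[i.+1]addn1 iotaD map_cat steps_cat add0n /=.
case: (steps q _) (defined i) => //= q' _.
by case E: (step q' _) => //= _; apply: step_delta E.
Qed.

Lemma gb_accepting_shift w r m :
  gb_accepting X w r <-> gb_accepting X (fun i => w (m + i)) (fun i => r (m + i)).
Proof.
split=> acc c N.
  have [i [le_mN_i c_i]] := acc c (m + N).
  have le_mi : m <= i by apply: leq_trans (leq_addr N m) le_mN_i.
  by exists (i - m); rewrite addnS subnKC //; split=> //; lia.
have [i [le_Ni c_i]] := acc c N.
by exists (m + i); rewrite -addnS (leq_trans le_Ni (leq_addl m i)).
Qed.

Hypothesis det : deterministic X.

Lemma delta_step q a q' : delta q a q' -> step q a = Some q'.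
Proof.
by move=> dq'; rewrite /step; case: pickP => [q'' /det/(_ dq') -> // | /(_ q')]; rewrite dq'.
Qed.

Section OnARun.
Variables (w : word S) (r : nat -> Q).
Hypothesis run : forall i, delta (r i) (w i) (r i.+1).

Lemma steps_run j k : steps (r j) (map w (iota j k)) = Some (r (j + k)).
Proof.
elim: k j => [|k IHk] j /=; first by rewrite addn0.
by rewrite (delta_step (run j)) /= IHk addSnnS.
Qed.

Lemma labels_run j k :
  labels (r j) (map w (iota j k)) = [seq lab (r i) (w i) (r i.+1) | i <- iota j k].
Proof. by elim: k j => //= k IHk j; rewrite (delta_step (run j)) IHk. Qed.

End OnARun.

Lemma accepts_from_wcat q0 u q w :
  steps q0 u = Some q -> accepts_from q0 (wcat u w) <-> accepts_from q w.
Proof.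
move=> reach_q; split=> [[r [[r0 run] acc]] | [r [[r0 run] acc]]].
- have run_shift i : r (size u + i) = odflt q (steps q (map w (iota 0 i))).
    have := steps_run run 0 (size u + i).
    by rewrite map_wcat_iota steps_cat r0 reach_q add0n /= => ->.
  have run_w : run_from q w (fun i => r (size u + i)).
    split=> [|i]; first by rewrite run_shift.
    by have := run (size u + i); rewrite wcat_shift addnS.
  exists (fun i => r (size u + i)); split=> //.
  have -> : w = (fun i => wcat u w (size u + i)) by apply: funext => i; rewrite wcat_shift.
  exact: (gb_accepting_shift _ _ (size u)).1 acc.
- have prefix_r k : steps q0 (map (wcat u w) (iota 0 (size u + k))) = Some (r k).
    by rewrite map_wcat_iota steps_cat reach_q /= -r0 steps_run.
  have [rc [rc0 runc]] : exists rc, run_from q0 (wcat u w) rc.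
    apply: run_of_steps => k.
    by apply: (steps_iota_le (leq_addl (size u) k)); rewrite prefix_r.
  have rc_shift : (fun i => rc (size u + i)) = r.
    by apply: funext => i; have := steps_run runc 0 (size u + i); rewrite rc0 prefix_r => -[].
  have shift_w : (fun i => wcat u w (size u + i)) = w by apply: funext => i; rewrite wcat_shift.
  by exists rc; split=> //; apply/(gb_accepting_shift _ _ (size u)); rewrite rc_shift shift_w.
Qed.

Lemma steps_omega_word q a0 v m :
  steps q v = Some q -> steps q (map (omega_word a0 v) (iota 0 (m * size v))) = Some q.
Proof.
move=> cycle_v; elim: m => // m IHm.
by rewrite mulSnr iotaD map_cat steps_cat IHm add0n /= map_omega_word_period.
Qed.

Lemma labels_omega_word q a0 v r m :
  steps q v = Some q -> run_from q (omega_word a0 v) r ->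
  labels q v = [seq lab (r i) (omega_word a0 v i) (r i.+1) | i <- iota (m * size v) (size v)].
Proof.
move=> cycle_v [r0 run]; rewrite -labels_run //.
have := steps_run run 0 (m * size v).
by rewrite r0 steps_omega_word // => -[<-]; rewrite map_omega_word_period.
Qed.

Lemma accepts_from_omega_word q a0 v :
  steps q v = Some q -> 0 < size v ->
  accepts_from q (omega_word a0 v) <->
  forall c : C, has (fun L : {set C} => c \in L) (labels q v).
Proof.
move=> cycle_v v_gt0; split=> [[r [run acc]] c | seen].
  have [i [_ c_i]] := acc c 0.
  rewrite (labels_omega_word (i %/ size v) cycle_v run).
  apply/hasP; exists (lab (r i) (omega_word a0 v i) (r i.+1)) => //.
  by apply: map_f; rewrite mem_iota leq_divM /=; lia.
have [r run] : exists r, run_from q (omega_word a0 v) r.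
  apply: run_of_steps => k.
  by apply: (steps_iota_le (leq_pmulr k v_gt0)); rewrite steps_omega_word.
exists r; split=> // c N.
have /hasP[L] := seen c; rewrite (labels_omega_word N cycle_v run).
move=> /mapP[i]; rewrite mem_iota => /andP[le_Ni _] -> c_i.
by exists i; split=> //; apply: leq_trans le_Ni; apply: leq_pmulr.
Qed.

End DeterministicRuns.

Arguments step {S} X q a.
Arguments steps {S} X q s.
Arguments labels {S} X q s.
Arguments run_from {S} X q w r.
Arguments accepts_from {S} X q w.

Lemma recurrent_value (T : finType) (f : nat -> T) :
  exists z, forall M, exists j, M <= j /\ f j = z.
Proof.
apply: contrapT => /forallNP no_recurrent.
have bounded z : exists M, forall j, M <= j -> f j <> z.
  have /existsNP[M /forallNP never] := no_recurrent z.
  by exists M => j le_Mj fj; apply: (never j).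
have [M M_bound] := choice bounded.
pose K := \max_(z : T) M z.
by apply: (M_bound (f K) K) => //; apply: (leq_bigmax (f K)).
Qed.

Section Recolouring.
Variables (Sigma : finType) (A B : gba Sigma).
Notation P := (gba_state Sigma B).
Notation Q := (gba_state Sigma A).
Notation C := (gba_col Sigma A).
Notation D := (gba_col Sigma B).
Notation initA := (gba_init Sigma A).
Notation initB := (gba_init Sigma B).

Definition live (p : P) := exists w, accepts_from B p w.

Definition jointly_reachable (p : P) (x : Q) :=
  exists u, steps B initB u = Some p /\ steps A initA u = Some x.

Definition avoiding_cycle (c : C) (p : P) (x : Q) (v : seq Sigma) :=
  [/\ steps B p v = Some p, steps A x v = Some x
    & all (fun L : {set C} => c \notin L) (labels A x v)].

Definition on_avoiding_cycle (y : C * P * Q) (q : P) (a : Sigma) :=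
  let: (c, p, x) := y in jointly_reachable p x /\
  exists u v, steps B p u = Some q /\ avoiding_cycle c p x (u ++ a :: v).

Definition recolour : gba Sigma :=
  @Gba Sigma P (C * P * Q)%type initB
    (fun q a q' => gba_delta Sigma B q a q' && `[< live q' >])
    (fun q a _ => [set y | ~~ `[< on_avoiding_cycle y q a >]]).

Hypotheses (detA : deterministic A) (detB : deterministic B) (eqBA : same_lang B A).

Lemma recolour_det : deterministic recolour.
Proof. by move=> p a q q' /andP[dq _] /andP[dq' _]; apply: detB dq dq'. Qed.

Lemma avoiding_cycle_cat c p x v1 v2 :
  avoiding_cycle c p x v1 -> avoiding_cycle c p x v2 -> avoiding_cycle c p x (v1 ++ v2).
Proof.
move=> [Bv1 Av1 avoid1] [Bv2 Av2 avoid2].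
split; [by rewrite steps_cat Bv1 | by rewrite steps_cat Av1 |].
by rewrite labels_cat Av1 all_cat avoid1.
Qed.

Lemma avoiding_cycle_rejecting c p x v :
  jointly_reachable p x -> avoiding_cycle c p x v -> 0 < size v ->
  ~ forall d : D, has (fun L : {set D} => d \in L) (labels B p v).
Proof.
move=> [u [reach_p reach_x]] [Bv Av avoid] v_gt0 all_seen.
have a0 : Sigma by case: (v) v_gt0.
have acc_B : accepts B (wcat u (omega_word a0 v)).
  by apply/(accepts_from_wcat detB _ reach_p)/accepts_from_omega_word.
have /eqBA/(accepts_from_wcat detA _ reach_x) := acc_B.
move=> /(accepts_from_omega_word detA a0 Av v_gt0)/(_ c)/hasP[L L_v c_L].
by move: avoid => /allP/(_ L L_v); rewrite c_L.
Qed.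

Lemma on_avoiding_cycle_between w r rho c j0 i j1 :
  run_from B initB w r -> run_from A initA w rho ->
  j0 <= i < j1 -> (r j1, rho j1) = (r j0, rho j0) ->
  (forall t, j0 <= t -> c \notin gba_lab Sigma A (rho t) (w t) (rho t.+1)) ->
  on_avoiding_cycle (c, r j0, rho j0) (r i) (w i).
Proof.
move=> [r0 runB] [rho0 runA] /andP[le_j0i lt_ij1] [rj1 rhoj1] avoid.
split; first by exists (map w (iota 0 j0)); rewrite -r0 -rho0 !steps_run.
exists (map w (iota j0 (i - j0))), (map w (iota i.+1 (j1 - i.+1))).
have -> : map w (iota j0 (i - j0)) ++ w i :: map w (iota i.+1 (j1 - i.+1)) =
          map w (iota j0 (j1 - j0)).
  have -> : j1 - j0 = (i - j0) + (j1 - i.+1).+1 by lia.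
  by rewrite iotaD map_cat subnKC.
have le_j0j1 : j0 <= j1 by lia.
split; first by rewrite (steps_run detB runB) subnKC.
split; first by rewrite (steps_run detB runB) subnKC ?rj1.
  by rewrite (steps_run detA runA) subnKC ?rhoj1.
rewrite (labels_run detA runA).
by apply/allP => L /mapP[t]; rewrite mem_iota => /andP[le_j0t _] ->; apply: avoid.
Qed.

Lemma run_A_of_recolour w r :
  run_from recolour initB w r -> exists rho, run_from A initA w rho.
Proof.
move=> [r0 run]; apply: run_of_steps => -[//|k].
have runB i : gba_delta Sigma B (r i) (w i) (r i.+1) by case/andP: (run i).
have [w' acc_w'] : live (r k.+1) by case/andP: (run k) => _ /asboolP.
have reach : steps B initB (map w (iota 0 k.+1)) = Some (r k.+1).
  by rewrite -r0 (steps_run detB runB).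
have /eqBA[rho [[rho0 runA] _]] := (accepts_from_wcat detB _ reach).2 acc_w'.
have := steps_run detA runA 0 (size (map w (iota 0 k.+1)) + 0).
by rewrite map_wcat_iota cats0 rho0 => ->.
Qed.

Lemma recolour_lang_sub w : accepts recolour w -> accepts A w.
Proof.
move=> [r [run acc]].
have [rho runA] := run_A_of_recolour run.
have runB : run_from B initB w r by case: run => r0 run; split=> // i; case/andP: (run i).
exists rho; split=> //; apply: contrapT => /existsNP[c /existsNP[N never]].
have avoid t : N <= t -> c \notin gba_lab Sigma A (rho t) (w t) (rho t.+1).
  by move=> le_Nt; apply/negP => c_t; apply: never; exists t.
have [[p x] recurrent] := recurrent_value (fun i => (r i, rho i)).
have [j0 [le_Nj0 [rj0 rhoj0]]] := recurrent N.
have [i [le_j0i]] := acc (c, p, x) j0.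
have [j1 [lt_ij1 Ej1]] := recurrent i.+1.
rewrite inE -rj0 -rhoj0 => /asboolP; apply.
apply: (on_avoiding_cycle_between runB runA (j1 := j1)).
- by rewrite le_j0i.
- by rewrite Ej1 rj0 rhoj0.
- by move=> t le_j0t; apply: avoid; apply: leq_trans le_j0t.
Qed.

Lemma avoiding_cycle_covering w r c p x N :
  run_from B initB w r -> gb_accepting B w r ->
  (forall i, N <= i -> on_avoiding_cycle (c, p, x) (r i) (w i)) ->
  exists2 v, 0 < size v & avoiding_cycle c p x v /\
    forall d : D, has (fun L : {set D} => d \in L) (labels B p v).
Proof.
move=> [_ runB] acc on_cycle.
have through i : N <= i -> exists2 v, 0 < size v & avoiding_cycle c p x v /\
    gba_lab Sigma B (r i) (w i) (r i.+1) \in labels B p v.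
  move=> /on_cycle[_ [u [v [reach_ri cyc]]]].
  exists (u ++ w i :: v); first by rewrite size_cat addnS.
  by rewrite labels_cat reach_ri /= (delta_step detB (runB i)) mem_cat mem_head orbT.
have covering (ds : seq D) : exists2 v, 0 < size v & avoiding_cycle c p x v /\
    forall d, d \in ds -> has (fun L : {set D} => d \in L) (labels B p v).
  elim: ds => [|d ds [v v_gt0 [cyc seen]]].
    by have [v v_gt0 [cyc _]] := through N (leqnn N); exists v.
  have [i [le_Ni d_i]] := acc d N.
  have [v' _ [cyc' lab_i]] := through i le_Ni.
  exists (v ++ v'); first by rewrite size_cat ltn_addr.
  split; first exact: avoiding_cycle_cat.
  move=> d'; case: cyc => Bv _ _; rewrite inE labels_cat Bv has_cat.
  case/orP => [/eqP -> | /seen -> //]; apply/orP; right.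
  by apply/hasP; exists (gba_lab Sigma B (r i) (w i) (r i.+1)).
have [v v_gt0 [cyc seen]] := covering (enum D).
by exists v => //; split=> // d; apply: seen; rewrite mem_enum.
Qed.

Lemma recolour_lang_sup w : accepts A w -> accepts recolour w.
Proof.
move=> /eqBA[r [[r0 runB] acc]].
have live_r i : live (r i).
  exists (fun j => w (i + j)), (fun j => r (i + j)).
  split; last exact: (gb_accepting_shift _ _ i).1 acc.
  by split=> [|j]; rewrite ?addn0 // addnS; apply: runB.
exists r; split; first by split=> // i; rewrite /= runB; apply/asboolP.
move=> [[c p] x] N; apply: contrapT => /forallNP never.
have on_cycle i : N <= i -> on_avoiding_cycle (c, p, x) (r i) (w i).
  move=> le_Ni; apply: contrapT => off_cycle; apply: (never i).
  by rewrite inE; split=> //; apply/asboolP.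
have [reach _] := on_cycle N (leqnn N).
have [v v_gt0 [cyc seen]] := avoiding_cycle_covering (conj r0 runB) acc on_cycle.
exact: avoiding_cycle_rejecting reach cyc v_gt0 seen.
Qed.

Lemma ncolours_recolour : ncolours recolour = ncolours A * nstates B * nstates A.
Proof. by rewrite /ncolours /= !card_prod. Qed.

End Recolouring.

Lemma exists_state_minimal (Sigma : finType) (A : gba Sigma) :
  deterministic A -> exists2 B : gba Sigma, deterministic B /\ same_lang B A &
    forall B' : gba Sigma, deterministic B' -> same_lang B' A -> nstates B <= nstates B'.
Proof.
move=> detA.
pose realisable n :=
  `[< exists B : gba Sigma, [/\ deterministic B, same_lang B A & nstates B = n] >].
have realisable_A : exists n, realisable n by exists (nstates A); apply/asboolP; exists A.
case: (ex_minnP realisable_A) => m /asboolP[B [detB eqBA <-]] minimal.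
by exists B => // B' detB' eqB'A; apply: minimal; apply/asboolP; exists B'.
Qed.

Theorem lemma31 :
  exists c : nat,
    forall (Sigma : finType) (A : gba Sigma),
      deterministic A ->
      exists B : gba Sigma,
        [/\ deterministic B,
            same_lang B A,
            (forall B' : gba Sigma, deterministic B' -> same_lang B' A ->
                nstates B <= nstates B')
          & ncolours B <= c * (nstates A) ^ 2 * ncolours A].
Proof.
exists 1 => Sigma A detA.
have [B [detB eqBA] minimal] := exists_state_minimal detA.
have le_BA : nstates B <= nstates A by apply: minimal => // w.
exists (recolour A B); split.
- exact: recolour_det.
- by move=> w; split; [apply: recolour_lang_sub | apply: recolour_lang_sup].
- exact: minimal.
- rewrite ncolours_recolour mul1n [_ ^ 2 * _]mulnC expnS expn1 mulnA.
  by rewrite leq_mul2r leq_mul2l le_BA !orbT.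
Qed.
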